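(* Let $(E,C)$ be a separated graph with $E^0$ and $E^1$ countable, let $S\subseteq C_{fin}$ and let $K$ be a field. In the algebra $L_K(E,C,S)$ the following hold: 1. $e\neq 0$ for each $e\in E^1$; 2. $v\neq 0$ for each $v\in E^0$; 3. $e^*f\neq 0$ for each $e\in X$, $f\in Y$, where $X,Y\in C_v$ with $X\neq Y$; 4. for each finite set $X\in C_v\setminus S$, $\sum_{e\in X}ee^*v=\sum_{e\in X}ee^*=v\sum_{e\in X}ee^*$, but $\sum_{e\in X}ee^*\neq v$; 5. for finite sets $X,Y\in C\setminus S$ with $X\neq Y$, $\sum_{e\in X}ee^*\neq\sum_{f\in Y}ff^*$.
   Context: A separated graph is a pair $(E,C)$ where $E=(E^0,E^1,r,s)$ is a directed graph and $C=\bigcup_{v\in E^0}C_v$, where for each non-sink $v$, $C_v$ is a partition of $s^{-1}(v)$ into pairwise disjoint nonempty sets; $C_{fin}$ is the set of finite $Y\in C$. For $S\subseteq C_{fin}$ and a field $K$, the Cohn-Leavitt algebra $L_K(E,C,S)$ is the universal $K$-algebra generated by pairwise orthogonal idempotents $\{v:v\in E^0\}$ and elements $\{e,e^*:e\in E^1\}$ subject to: $s(e)e=er(e)=e$; $r(e)e^*=e^*s(e)=e^*$; $e^*f=\delta_{e,f}r(e)$ for $e,f\in Y$, $Y\in C$; $v=\sum_{e\in X}ee^*$ for every $X\in S\cap C_v$, $v$ non-sink. *)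

From HB Require Import structures.
From mathcomp Require Import all_boot all_algebra.
From mathcomp Require Import finmap boolp classical_sets cardinality.
Set Implicit Arguments. Unset Strict Implicit. Unset Printing Implicit Defensive.
Import GRing.Theory.
Local Open Scope ring_scope.
Local Open Scope classical_set_scope.

(* C is a set of subsets of E^1; (E,C) is a separated graph when C is a
   partition of E^1 into nonempty sets each contained in a fibre s^{-1}(v);
   then C_v := {X in C | X ⊆ s^{-1}(v)} is a partition of s^{-1}(v) for every
   non-sink v (and C_v is empty for a sink v), and C = ⋃_v C_v. *)
Definition separated_graph (V Ed : Type) (s : Ed -> V) (C : set (set Ed)) : Prop :=
  [/\ (forall X, C X -> X !=set0),
      (forall X, C X -> forall e f, X e -> X f -> s e = s f),
      (forall X Y, C X -> C Y -> X `&` Y !=set0 -> X = Y)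
    & (forall e, exists X, C X /\ X e)].

Definition Cv (V Ed : Type) (s : Ed -> V) (C : set (set Ed)) (v : V) : set (set Ed) :=
  [set X | C X /\ X `<=` s @^-1` [set v]].

Definition Cfin (Ed : Type) (C : set (set Ed)) : set (set Ed) :=
  [set X | C X /\ finite_set X].

(* Cohn-Leavitt algebras are in general non-unital, so we use associative,
   bilinear (not necessarily unital) K-algebras. *)
Record nuAlg (K : fieldType) := NUAlg {
  nua_sort :> lmodType K;
  nua_mul : nua_sort -> nua_sort -> nua_sort;
  nua_mulA : forall x y z, nua_mul x (nua_mul y z) = nua_mul (nua_mul x y) z;
  nua_mulDl : forall x y z, nua_mul (x + y) z = nua_mul x z + nua_mul y z;
  nua_mulDr : forall x y z, nua_mul x (y + z) = nua_mul x y + nua_mul x z;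
  nua_mulZl : forall (a : K) x y, nua_mul (a *: x) y = a *: nua_mul x y;
  nua_mulZr : forall (a : K) x y, nua_mul x (a *: y) = a *: nua_mul x y
}.

(* Sum over a finite set of edges (fset_set X enumerates X when X is finite). *)
Definition sum_over (K : fieldType) (A : nuAlg K) (Ed : choiceType)
  (X : set Ed) (F : Ed -> A) : A := \sum_(e <- fset_set X) F e.

(* Elements pv v, pe e, pes e (= e^* ) of A satisfy the defining relations of
   L_K(E,C,S). *)
Definition CL_relations (K : fieldType) (V Ed : choiceType)
  (s r : Ed -> V) (C S : set (set Ed)) (A : nuAlg K)
  (pv : V -> A) (pe pes : Ed -> A) : Prop :=
  let m := @nua_mul K A in
  [/\ (forall v, m (pv v) (pv v) = pv v) /\
        (forall v w, v <> w -> m (pv v) (pv w) = 0),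
      (forall e, m (pv (s e)) (pe e) = pe e /\ m (pe e) (pv (r e)) = pe e),
      (forall e, m (pv (r e)) (pes e) = pes e /\ m (pes e) (pv (s e)) = pes e),
      (forall Y e f, C Y -> Y e -> Y f ->
          m (pes e) (pe f) = if e == f then pv (r e) else 0)
    & (forall v X, S X -> Cv s C v X ->
          pv v = sum_over X (fun e => m (pe e) (pes e)))].

Definition nua_hom (K : fieldType) (A B : nuAlg K) (phi : A -> B) : Prop :=
  (forall (a : K) x y, phi (a *: x + y) = a *: phi x + phi y) /\
  (forall x y, phi (nua_mul x y) = nua_mul (phi x) (phi y)).

Definition is_CohnLeavitt (K : fieldType) (V Ed : choiceType)
  (s r : Ed -> V) (C S : set (set Ed)) (A : nuAlg K)
  (pv : V -> A) (pe pes : Ed -> A) : Prop :=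
  CL_relations s r C S pv pe pes /\
  forall (B : nuAlg K) (qv : V -> B) (qe qes : Ed -> B),
    CL_relations s r C S qv qe qes ->
    (exists phi : A -> B, nua_hom phi /\
        (forall v, phi (pv v) = qv v) /\
        (forall e, phi (pe e) = qe e) /\ (forall e, phi (pes e) = qes e)) /\
    (forall phi psi : A -> B, nua_hom phi -> nua_hom psi ->
        (forall v, phi (pv v) = psi (pv v)) ->
        (forall e, phi (pe e) = psi (pe e)) ->
        (forall e, phi (pes e) = psi (pes e)) ->
        forall x, phi x = psi x).

(* By universality it suffices to find one representation of the relations in which each claim
   holds.  We let the generators act, by pullback of functions, through partial maps on states
   (w, b): w is a vertex and b gives every block X of C a stack of edges.  The ghost edge e^*
   moves from r e to s e pushing e on the stack of its block, and e moves back popping it;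
   as pullback reverses composition, e e^* is the projection onto the states whose block stack
   has e on top.  Stacks are infinite streams, and on admissible states the stacks of the blocks
   in S are filled with edges of the block, which gives v = sum_(e in X) e e^* for X in S.
   Stacks of the other blocks may be empty, and states with such empty stacks separate
   sum_(e in X) e e^* from v and from the corresponding sum over another block. *)

From HB Require Import structures.
From mathcomp Require Import all_boot all_algebra.
From mathcomp Require Import finmap boolp classical_sets cardinality functions.
Set Implicit Arguments. Unset Strict Implicit. Unset Printing Implicit Defensive.
Import GRing.Theory.
Local Open Scope ring_scope.
Local Open Scope classical_set_scope.

Section NuAlgebraTheory.
Variables (K : fieldType) (A : nuAlg K).
Implicit Types x y : A.

Lemma nua_mul0r y : nua_mul 0 y = 0 :> A.
Proof. by apply: (addrI (nua_mul 0 y)); rewrite -nua_mulDl !addr0. Qed.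

Lemma nua_mulr0 x : nua_mul x 0 = 0 :> A.
Proof. by apply: (addrI (nua_mul x 0)); rewrite -nua_mulDr !addr0. Qed.

Lemma nua_mul_suml (I : Type) (l : seq I) (F : I -> A) y :
  nua_mul (\sum_(i <- l) F i) y = \sum_(i <- l) nua_mul (F i) y.
Proof.
by elim: l => [|i l IH]; rewrite ?big_nil ?nua_mul0r // !big_cons nua_mulDl IH.
Qed.

Lemma nua_mul_sumr (I : Type) (l : seq I) (F : I -> A) x :
  nua_mul x (\sum_(i <- l) F i) = \sum_(i <- l) nua_mul x (F i).
Proof.
by elim: l => [|i l IH]; rewrite ?big_nil ?nua_mulr0 // !big_cons nua_mulDr IH.
Qed.

End NuAlgebraTheory.

Section NuAlgebraMorphism.
Variables (K : fieldType) (A B : nuAlg K) (phi : A -> B).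
Hypothesis phi_hom : nua_hom phi.

Lemma nua_homD x y : phi (x + y) = phi x + phi y.
Proof. by have := phi_hom.1 1 x y; rewrite !scale1r. Qed.

Lemma nua_hom0 : phi 0 = 0.
Proof. by apply: (addrI (phi 0)); rewrite -nua_homD !addr0. Qed.

Lemma nua_hom_sum (I : Type) (l : seq I) (F : I -> A) :
  phi (\sum_(i <- l) F i) = \sum_(i <- l) phi (F i).
Proof. by elim: l => [|i l IH]; rewrite ?big_nil ?nua_hom0 // !big_cons nua_homD IH. Qed.

Lemma nua_hom_neq0 x : phi x <> 0 -> x <> 0.
Proof. by move=> phix0 x0; apply: phix0; rewrite x0 nua_hom0. Qed.

End NuAlgebraMorphism.

Notation block_proj pe pes X := (sum_over X (fun e => nua_mul (pe e) (pes e))).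

Section BlockProjections.
Variables (K : fieldType) (V Ed : choiceType) (s r : Ed -> V) (C S : set (set Ed)).
Variables (A : nuAlg K) (pv : V -> A) (pe pes : Ed -> A).
Hypothesis rel : CL_relations s r C S pv pe pes.
Variables (v : V) (X : set Ed).
Hypotheses (finX : finite_set X) (Xv : X `<=` s @^-1` [set v]).

Lemma block_proj_mul_vertex : nua_mul (block_proj pe pes X) (pv v) = block_proj pe pes X.
Proof.
rewrite /sum_over nua_mul_suml; apply: eq_big_seq => e.
rewrite in_fset_set // inE => Xe.
by rewrite -nua_mulA -(Xv Xe); case: rel => _ _ /(_ e) [_ ->].
Qed.

Lemma vertex_mul_block_proj : nua_mul (pv v) (block_proj pe pes X) = block_proj pe pes X.
Proof.
rewrite /sum_over nua_mul_sumr; apply: eq_big_seq => e.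
rewrite in_fset_set // inE => Xe.
by rewrite nua_mulA -(Xv Xe); case: rel => _ /(_ e) [-> _].
Qed.

End BlockProjections.

Section Endomorphisms.
Variables (K : fieldType) (M : lmodType K).

Record endo := Endo {
  endo_fun :> M -> M;
  endoD : {morph endo_fun : x y / x + y};
  endoZ : forall a : K, {morph endo_fun : x / a *: x} }.

Lemma endoP (f g : endo) : f =1 g -> f = g.
Proof.
case: f g => f fD fZ [g gD gZ] /= /funext fg; subst g.
by rewrite (Prop_irrelevance fD gD) (Prop_irrelevance fZ gZ).
Qed.

Definition endo_zero : endo.
Proof. by exists (fun _ => 0) => [x y|a x]; rewrite ?addr0 ?scaler0. Defined.

Definition endo_add (f g : endo) : endo.
Proof.
exists (fun x => f x + g x) => [x y|a x]; first by rewrite !endoD addrACA.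
by rewrite !endoZ scalerDr.
Defined.

Definition endo_opp (f : endo) : endo.
Proof.
by exists (fun x => - f x) => [x y|a x]; rewrite ?endoD ?opprD ?endoZ ?scalerN.
Defined.

Definition endo_scale (a : K) (f : endo) : endo.
Proof.
exists (fun x => a *: f x) => [x y|b x]; first by rewrite endoD scalerDr.
by rewrite endoZ !scalerA mulrC.
Defined.

Definition endo_comp (f g : endo) : endo.
Proof. by exists (fun x => f (g x)) => [x y|a x]; rewrite ?endoD ?endoZ. Defined.

HB.instance Definition _ := gen_eqMixin endo.
HB.instance Definition _ := gen_choiceMixin endo.

Lemma endo_addA : associative endo_add.
Proof. by move=> f g h; apply: endoP => x /=; rewrite addrA. Qed.
Lemma endo_addC : commutative endo_add.
Proof. by move=> f g; apply: endoP => x /=; rewrite addrC. Qed.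
Lemma endo_add0 : left_id endo_zero endo_add.
Proof. by move=> f; apply: endoP => x /=; rewrite add0r. Qed.
Lemma endo_addN : left_inverse endo_zero endo_opp endo_add.
Proof. by move=> f; apply: endoP => x /=; rewrite addNr. Qed.

HB.instance Definition _ :=
  GRing.isZmodule.Build endo endo_addA endo_addC endo_add0 endo_addN.

Lemma endo_scaleA a b f : endo_scale a (endo_scale b f) = endo_scale (a * b) f.
Proof. by apply: endoP => x /=; rewrite scalerA. Qed.
Lemma endo_scale1 : left_id 1 endo_scale.
Proof. by move=> f; apply: endoP => x /=; rewrite scale1r. Qed.
Lemma endo_scaleDr : right_distributive endo_scale +%R.
Proof. by move=> a f g; apply: endoP => x /=; rewrite scalerDr. Qed.
Lemma endo_scaleDl f : {morph endo_scale^~ f : a b / a + b}.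
Proof. by move=> a b; apply: endoP => x /=; rewrite scalerDl. Qed.

HB.instance Definition _ := GRing.Zmodule_isLmodule.Build K endo
  endo_scaleA endo_scale1 endo_scaleDr endo_scaleDl.

Lemma endo_compA f g h : endo_comp f (endo_comp g h) = endo_comp (endo_comp f g) h.
Proof. exact: endoP. Qed.
Lemma endo_compDl f g h : endo_comp (f + g) h = endo_comp f h + endo_comp g h.
Proof. exact: endoP. Qed.
Lemma endo_compDr f g h : endo_comp f (g + h) = endo_comp f g + endo_comp f h.
Proof. by apply: endoP => x /=; rewrite endoD. Qed.
Lemma endo_compZl a f g : endo_comp (a *: f) g = a *: endo_comp f g.
Proof. exact: endoP. Qed.
Lemma endo_compZr a f g : endo_comp f (a *: g) = a *: endo_comp f g.
Proof. by apply: endoP => x /=; rewrite endoZ. Qed.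

Definition endo_nuAlg : nuAlg K := NUAlg endo_compA endo_compDl endo_compDr
  endo_compZl endo_compZr.

Lemma endo_sumE (I : Type) (l : seq I) (F : I -> endo) x :
  (\sum_(i <- l) F i : endo) x = \sum_(i <- l) F i x.
Proof. by elim: l => [|i l IH]; rewrite ?big_nil ?big_cons //= IH. Qed.

End Endomorphisms.

Section Pullback.
Variables (K : fieldType) (T : Type).

Definition pullback (g : T -> option T) : endo (T -> K^o).
Proof.
exists (fun h t => if g t is Some u then h u else 0) => [h h'|a h];
  by rewrite !fctE; apply/funext => t; case: (g t); rewrite ?addr0 ?scaler0.
Defined.

Lemma pullback_comp g g' :
  endo_comp (pullback g) (pullback g') = pullback (fun t => obind g' (g t)).
Proof. by apply: endoP => h; apply: funext => t /=; case: (g t). Qed.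

Lemma pullback_none : pullback (fun _ => None) = 0.
Proof. exact: endoP. Qed.

Lemma pullback_neq0 (g : T -> option T) t : isSome (g t) -> pullback g <> 0.
Proof.
case gt: (g t) => [u|] // _ pg0.
have := congr1 (fun f : endo (T -> K^o) => f (fun _ => 1) t) pg0.
by rewrite /= gt => /eqP; rewrite oner_eq0.
Qed.

End Pullback.

Section Stacks.
Variable Ed : Type.

Definition stacks := set Ed -> nat -> option Ed.

Definition set_stack (b : stacks) (X : set Ed) (st : nat -> option Ed) : stacks :=
  fun Z => if Z == X then st else b Z.

Definition push (e : Ed) (st : nat -> option Ed) n := if n is n'.+1 then st n' else Some e.
Definition pop (st : nat -> option Ed) n := st n.+1.

Lemma set_stack_same b X st : set_stack b X st X = st.
Proof. by rewrite /set_stack eqxx. Qed.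

Lemma set_stack_other b X st Z : Z <> X -> set_stack b X st Z = b Z.
Proof. by rewrite /set_stack => /eqP/negPf ->. Qed.

Lemma set_stack_id b X : set_stack b X (b X) = b.
Proof. by apply/funext => Z; rewrite /set_stack; case: eqP => [->|]. Qed.

Lemma set_stack_set b X st st' : set_stack (set_stack b X st) X st' = set_stack b X st'.
Proof. by apply/funext => Z; rewrite /set_stack; case: eqP. Qed.

Lemma pop_push e st : pop (push e st) = st.
Proof. by []. Qed.

Lemma push_pop e st : st 0 = Some e -> push e (pop st) = st.
Proof. by move=> st0; apply/funext => -[|n]. Qed.

End Stacks.

Section StackModel.
Variables (V Ed : choiceType) (s r : Ed -> V) (C S : set (set Ed)) (K : fieldType).
Hypotheses (sepC : separated_graph s C) (SC : S `<=` Cfin C).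

Definition block (e : Ed) : set Ed := xget set0 [set X | C X /\ X e].

Lemma blockE X e : C X -> X e -> block e = X.
Proof.
move=> CX Xe; have [CY Ye] : C (block e) /\ block e e.
  by apply: (@xgetI _ set0 [set X | C X /\ X e] X); split.
by case: sepC => _ _ disjC _; apply: disjC => //; exists e.
Qed.

Lemma block_mem e : block e e.
Proof. by case: sepC => _ _ _ /(_ e) [X [CX Xe]]; rewrite (blockE CX Xe). Qed.

Definition admissible (b : stacks Ed) : bool :=
  `[< forall X, S X -> forall n, exists2 e, b X n = Some e & X e >].

Lemma admissible_set_stack b X st : admissible b ->
  (S X -> forall n, exists2 e, st n = Some e & X e) -> admissible (set_stack b X st).
Proof.
move=> /asboolP admb stX; apply/asboolP => Z SZ n; rewrite /set_stack.
by case: eqP => [ZX|_]; [move: SZ; rewrite ZX => /stX | exact: admb].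
Qed.

Lemma admissible_pop b X : admissible b -> admissible (set_stack b X (pop (b X))).
Proof. by move=> admb; apply: admissible_set_stack => // SX n; apply: (asboolP _ admb). Qed.

Lemma admissible_push b e : admissible b ->
  admissible (set_stack b (block e) (push e (b (block e)))).
Proof.
move=> admb; apply: admissible_set_stack => // SX [|n].
  by exists e; last exact: block_mem.
exact: (asboolP _ admb).
Qed.

Definition stack0 : stacks Ed := fun X _ => xget None (Some @` X).

Lemma admissible_stack0 : admissible stack0.
Proof.
apply/asboolP => X SX n; case: sepC => nonempty _ _ _.
have [e Xe] := nonempty X (SC SX).1.
have [e' Xe' e'E] : (Some @` X) (xget None (Some @` X)) by apply: xgetI; exists e.
by exists e' => //; rewrite /stack0 -e'E.
Qed.

Definition state := (V * stacks Ed)%type.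

Definition vertex_map (v : V) (t : state) : option state :=
  if (t.1 == v) && admissible t.2 then Some t else None.

Definition edge_map (e : Ed) (t : state) : option state :=
  if [&& t.1 == s e, admissible t.2 & t.2 (block e) 0 == Some e]
  then Some (r e, set_stack t.2 (block e) (pop (t.2 (block e)))) else None.

Definition ghost_map (e : Ed) (t : state) : option state :=
  if (t.1 == r e) && admissible t.2
  then Some (s e, set_stack t.2 (block e) (push e (t.2 (block e)))) else None.

Definition stack_alg : nuAlg K := endo_nuAlg (state -> K^o).
Definition vertex_op v : stack_alg := pullback K (vertex_map v).
Definition edge_op e : stack_alg := pullback K (edge_map e).
Definition ghost_op e : stack_alg := pullback K (ghost_map e).

Local Notation m := (@nua_mul K stack_alg).

Lemma stack_mulE (x y : stack_alg) : m x y = endo_comp x y.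
Proof. by []. Qed.

Lemma vertex_op_idem v : m (vertex_op v) (vertex_op v) = vertex_op v.
Proof.
rewrite stack_mulE pullback_comp; congr pullback; apply/funext => -[w b].
by rewrite /vertex_map /=; case: ifP => //= ->.
Qed.

Lemma vertex_op_orth v w : v <> w -> m (vertex_op v) (vertex_op w) = 0.
Proof.
move=> /eqP/negPf vw; rewrite stack_mulE pullback_comp -pullback_none; congr pullback.
apply/funext => -[u b]; rewrite /vertex_map /=.
by case: (u =P v) => //= ->; case: admissible; rewrite //= vw.
Qed.

Lemma source_edge_op e : m (vertex_op (s e)) (edge_op e) = edge_op e.
Proof.
rewrite stack_mulE pullback_comp; congr pullback; apply/funext => -[w b].
rewrite /vertex_map /=; case: ifP => [/andP[/eqP-> _] //|].
by rewrite /edge_map /= andbA => ->.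
Qed.

Lemma edge_op_range e : m (edge_op e) (vertex_op (r e)) = edge_op e.
Proof.
rewrite stack_mulE pullback_comp; congr pullback; apply/funext => -[w b].
rewrite /vertex_map /edge_map /=; case: and3P => //= -[_ admb _].
by rewrite eqxx admissible_pop.
Qed.

Lemma range_ghost_op e : m (vertex_op (r e)) (ghost_op e) = ghost_op e.
Proof.
rewrite stack_mulE pullback_comp; congr pullback; apply/funext => -[w b].
rewrite /vertex_map /=; case: ifP => [/andP[/eqP-> _] //|].
by rewrite /ghost_map /= => ->.
Qed.

Lemma ghost_op_source e : m (ghost_op e) (vertex_op (s e)) = ghost_op e.
Proof.
rewrite stack_mulE pullback_comp; congr pullback; apply/funext => -[w b].
rewrite /vertex_map /ghost_map /=; case: andP => //= -[_ admb].
by rewrite eqxx admissible_push.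
Qed.

Lemma ghost_edge_op Y e f : C Y -> Y e -> Y f ->
  m (ghost_op e) (edge_op f) = if e == f then vertex_op (r e) else 0.
Proof.
move=> CY Ye Yf; rewrite stack_mulE pullback_comp.
have bef : block e = block f by rewrite (blockE CY Ye) (blockE CY Yf).
case: eqVneq => [<-|nef].
- congr pullback; apply/funext => -[w b]; rewrite /ghost_map /vertex_map /=.
  case: andP => //= -[/eqP-> admb]; rewrite /edge_map /= eqxx admissible_push //=.
  by rewrite set_stack_same eqxx /= set_stack_set pop_push set_stack_id.
- rewrite -pullback_none; congr pullback; apply/funext => -[w b].
  rewrite /ghost_map /=; case: andP => //= -[_ admb].
  have /negPf nef' : Some e != Some f by apply: contra nef => /eqP[->].
  by rewrite /edge_map /= -bef set_stack_same nef' !andbF.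
Qed.

Lemma edge_ghost_opE e h w b : m (edge_op e) (ghost_op e) h (w, b) =
  if [&& w == s e, admissible b & b (block e) 0 == Some e] then h (w, b) else 0.
Proof.
rewrite stack_mulE pullback_comp /= /edge_map /=.
case: and3P => //= -[/eqP-> admb /eqP top].
rewrite /ghost_map /= eqxx admissible_pop //= set_stack_same set_stack_set.
by rewrite push_pop // set_stack_id.
Qed.

Definition stack_block_proj (X : set Ed) : stack_alg := block_proj edge_op ghost_op X.

Lemma stack_block_projE X h w b : C X -> finite_set X ->
  stack_block_proj X h (w, b) =
  \sum_(e <- fset_set X)
    (if [&& w == s e, admissible b & b X 0 == Some e] then h (w, b) else 0).
Proof.
move=> CX finX; rewrite /stack_block_proj /sum_over endo_sumE fct_sumE.
apply: eq_big_seq => e; rewrite in_fset_set // inE => Xe.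
by rewrite edge_ghost_opE (blockE CX Xe).
Qed.

Lemma stack_block_proj_empty X h w b : C X -> finite_set X -> b X 0 = None ->
  stack_block_proj X h (w, b) = 0.
Proof.
by move=> CX finX top; rewrite stack_block_projE // big1 // => e _; rewrite top !andbF.
Qed.

Lemma stack_block_proj_top X e h b : C X -> finite_set X -> X e -> admissible b ->
  b X 0 = Some e -> stack_block_proj X h (s e, b) = h (s e, b).
Proof.
move=> CX finX Xe admb top.
rewrite stack_block_projE // (bigD1_seq e) ?fset_uniq ?in_fset_set ?inE //.
rewrite eqxx admb top eqxx /= big1 ?addr0 // => f nfe.
have /negPf -> : Some e != Some f by apply: contra nfe => /eqP[->].
by rewrite andbF.
Qed.

Lemma vertex_op_stack_block_proj v X : S X -> Cv s C v X ->
  vertex_op v = stack_block_proj X.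
Proof.
move=> SX [CX Xv]; have finX := (SC SX).2.
apply: endoP => h; apply/funext => -[w b]; rewrite /= /vertex_map /=.
case: ifP => [/andP[/eqP-> admb] | nwb].
- have [e top Xe] := asboolP _ admb X SX 0.
  by rewrite -(Xv _ Xe) stack_block_proj_top.
- rewrite stack_block_projE // big_seq big1 // => e; rewrite in_fset_set // inE => Xe.
  by rewrite (Xv _ Xe) andbA nwb.
Qed.

Lemma stack_model_relations : CL_relations s r C S vertex_op edge_op ghost_op.
Proof.
split.
- by split; [exact: vertex_op_idem | exact: vertex_op_orth].
- by move=> e; split; [exact: source_edge_op | exact: edge_op_range].
- by move=> e; split; [exact: range_ghost_op | exact: ghost_op_source].
- exact: ghost_edge_op.
- exact: vertex_op_stack_block_proj.
Qed.

Lemma vertex_op_neq0 v : vertex_op v <> 0.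
Proof.
apply: (pullback_neq0 (t := (v, stack0))).
by rewrite /vertex_map /= eqxx admissible_stack0.
Qed.

Lemma edge_op_neq0 e : edge_op e <> 0.
Proof.
apply: (pullback_neq0 (t := (s e, set_stack stack0 (block e) (push e (stack0 (block e)))))).
by rewrite /edge_map /= eqxx admissible_push ?admissible_stack0 // set_stack_same eqxx.
Qed.

Lemma ghost_edge_op_neq0 v X Y e f : Cv s C v X -> Cv s C v Y -> X <> Y -> X e -> Y f ->
  m (ghost_op e) (edge_op f) <> 0.
Proof.
move=> [CX Xv] [CY Yv] XY Xe Yf; rewrite stack_mulE pullback_comp.
rewrite -(blockE CX Xe) -(blockE CY Yf) in XY *.
set b := set_stack stack0 (block f) (push f (stack0 (block f))).
have admb : admissible b by apply: admissible_push; exact: admissible_stack0.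
apply: (pullback_neq0 (t := (r e, b))).
rewrite /ghost_map /= eqxx admb /= /edge_map /= (Xv _ Xe) (Yv _ Yf) eqxx.
rewrite admissible_push //=.
rewrite set_stack_other; last by move/esym.
by rewrite /b set_stack_same eqxx.
Qed.

Lemma stack_block_proj_neq_vertex v X : C X -> finite_set X -> ~ S X ->
  stack_block_proj X <> vertex_op v.
Proof.
move=> CX finX nSX qXv.
set b := set_stack stack0 X (fun _ => None).
have admb : admissible b by apply: admissible_set_stack admissible_stack0 _.
have := congr1 (fun x : stack_alg => x (fun _ => 1) (v, b)) qXv.
rewrite /= stack_block_proj_empty ?/b ?set_stack_same // /vertex_map /= eqxx admb.
by move=> /eqP; rewrite eq_sym oner_eq0.
Qed.

Lemma stack_block_proj_inj X Y : C X -> C Y -> finite_set X -> finite_set Y ->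
  ~ S X -> ~ S Y -> X <> Y -> stack_block_proj X <> stack_block_proj Y.
Proof.
move=> CX CY finX finY nSX nSY XY qXY.
have [e Xe] : X !=set0 by case: sepC => nonempty _ _ _; exact: nonempty.
set b := set_stack (set_stack stack0 Y (fun _ => None)) X (fun _ => Some e).
have admb : admissible b.
  by do 2![apply: admissible_set_stack => //]; exact: admissible_stack0.
have := congr1 (fun x : stack_alg => x (fun _ => 1) (s e, b)) qXY.
rewrite /= stack_block_proj_top ?stack_block_proj_empty ?/b ?set_stack_same //.
  by move=> /eqP; rewrite oner_eq0.
by rewrite set_stack_other ?set_stack_same // => YX; apply: XY.
Qed.

End StackModel.

Theorem corollary3p5 (V Ed : countType) (s r : Ed -> V) (C S : set (set Ed))
  (K : fieldType) (A : nuAlg K) (pv : V -> A) (pe pes : Ed -> A) :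
  separated_graph s C ->
  S `<=` Cfin C ->
  is_CohnLeavitt s r C S pv pe pes ->
  let m := @nua_mul K A in
  let q X := sum_over X (fun e => m (pe e) (pes e)) in
  [/\ (forall e, pe e <> 0),
      (forall v, pv v <> 0),
      (forall v X Y e f, Cv s C v X -> Cv s C v Y -> X <> Y -> X e -> Y f ->
          m (pes e) (pe f) <> 0),
      (forall v X, Cv s C v X -> finite_set X -> ~ S X ->
          [/\ m (q X) (pv v) = q X, q X = m (pv v) (q X) & q X <> pv v])
    & (forall X Y, C X -> C Y -> finite_set X -> finite_set Y -> ~ S X -> ~ S Y ->
          X <> Y -> q X <> q Y)].
Proof.
move=> sepC SC [rel univ] /=.
have [[phi [phi_hom [phiv [phie phies]]]] _] :=
  univ _ _ _ _ (stack_model_relations r K sepC SC).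
have phiq X : phi (block_proj pe pes X) = stack_block_proj s r C S K X.
  rewrite /stack_block_proj /sum_over (nua_hom_sum phi_hom).
  by apply: eq_bigr => e _; rewrite phi_hom.2 phie phies.
split.
- by move=> e; apply: (nua_hom_neq0 phi_hom); rewrite phie; exact: edge_op_neq0 sepC SC e.
- by move=> v; apply: (nua_hom_neq0 phi_hom); rewrite phiv; exact: vertex_op_neq0 sepC SC v.
- move=> v X Y e f CvX CvY XY Xe Yf; apply: (nua_hom_neq0 phi_hom).
  by rewrite phi_hom.2 phies phie; exact: (ghost_edge_op_neq0 sepC SC) CvX CvY XY Xe Yf.
- move=> v X [CX Xv] finX nSX; split.
  + by rewrite (block_proj_mul_vertex rel finX Xv).
  + by rewrite (vertex_mul_block_proj rel finX Xv).
  + move=> qXv; apply: (stack_block_proj_neq_vertex (r := r) (K := K) sepC SC CX finX nSX).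
    by rewrite -phiq qXv phiv.
- move=> X Y CX CY finX finY nSX nSY XY qXY.
  apply: (stack_block_proj_inj (r := r) (K := K) sepC SC CX CY finX finY nSX nSY XY).
  by rewrite -!phiq qXY.
Qed.
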